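(* Consider an inventory system as in the context, and suppose in addition that $G$ is twice differentiable on $(0,\infty)$ with $l\le G''(y)\le L$ for all $y>0$, for constants $0<l\le L$. Let $$M=\frac{\Delta+\sum_{k=0}^{N-1}\mu_k}{N},\qquad u=\mathrm{LS}(\mu_0+\Delta,\mu_1,\dots,\mu_{N-1}),$$ $$S_u=\sum_{k=0}^{N-1}(u_k-M)^2,\qquad S_\mu=(\mu_0+\Delta-M)^2+\sum_{k=1}^{N-1}(\mu_k-M)^2.$$ Then $$J_{\pi^{\mathrm{my}}}(0)-J^*(0)\ \ge\ \frac{l}{2}\Big(S_\mu+\sum_{k=0}^{N-2}\sigma_k^2\Big)-\frac{L}{2}\Big(S_u+\sum_{k=0}^{N-2}\sigma_k^2\Big).$$
   Context: Inventory system: $N\ge1$; $G:\mathbb{R}_{\ge0}\to\mathbb{R}_{\ge0}$ is strictly convex and increasing with $G(0)=0$. Demands $w_0,\dots,w_{N-1}$ are independent random variables; $w_k$ has mean $\mu_k$, variance $\sigma_k^2$, and support exactly $[\mu_k-\Delta,\mu_k+\Delta]$, where $\Delta\ge0$ and $\mu_k-\Delta>0$ for all $k$. A (Markov) policy is a sequence $\pi=(\pi_0,\dots,\pi_{N-1})$ of measurable maps $\pi_k:\mathbb{R}_{\ge0}\to\mathbb{R}_{\ge0}$; the state evolves by $x_0=0$, $x_{k+1}=x_k+\pi_k(x_k)-w_k$. A policy is admissible if $x_k\ge0$ almost surely for all $k\in\{1,\dots,N\}$. Its expected cost is $J_\pi(0)=\sum_{k=0}^{N-1}\mathbb{E}[G(\pi_k(x_k))]$,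 and $J^*(0)$ denotes the infimum of $J_\pi(0)$ over admissible policies (the optimal cost). The myopic policy is $\pi^{\mathrm{my}}_k(x)=\max\{0,\mu_k+\Delta-x\}$. Block-averaging procedure $\mathrm{LS}$: given a finite sequence $v=(v_0,\dots,v_{N-1})$ of positive reals, define indices $0=k_0<k_1<\dots<k_n=N$ recursively: if $k_l<N$, let $k_{l+1}=k_l+j^*$, where $j^*$ is the largest element of $\arg\max_{j\in\{1,\dots,N-k_l\}}\frac{1}{j}\sum_{i=k_l}^{k_l+j-1}v_i$; stop when $k_n=N$. Then $\mathrm{LS}(v)=(u_0,\dots,u_{N-1})$ with $u_i=\frac{1}{k_{l+1}-k_l}\sum_{m=k_l}^{k_{l+1}-1}v_m$ for $k_l\le i<k_{l+1}$. *)

From HB Require Import structures.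
From mathcomp Require Import all_boot all_order all_algebra.
From mathcomp Require Import all_classical all_reals all_analysis.
Set Implicit Arguments. Unset Strict Implicit. Unset Printing Implicit Defensive.
Import Order.TTheory GRing.Theory Num.Theory.
Import numFieldNormedType.Exports.
Local Open Scope classical_set_scope.
Local Open Scope ring_scope.

Definition avg {R : realFieldType} (s : seq R) : R :=
  (\sum_(x <- s) x) / (size s)%:R.

(** the LARGEST j in {1,...,size v} maximizing avg (take j v) *)
Definition best_len {R : realFieldType} (v : seq R) : nat :=
  foldl (fun b j => if avg (take b v) <= avg (take j v) then j else b)
        1%N (iota 1 (size v)).

Fixpoint ls_aux {R : realFieldType} (fuel : nat) (v : seq R) : seq R :=
  match fuel with
  | 0%N => [::]
  | fuel'.+1 =>
      if v is [::] then [::] else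
      let j := best_len v in
      nseq j (avg (take j v)) ++ ls_aux fuel' (drop j v)
  end.

Definition LS {R : realFieldType} (v : seq R) : seq R := ls_aux (size v) v.

Definition mutually_independent {d} {T : measurableType d} {R : realType}
  (P : probability T R) (N : nat) (w : nat -> T -> R) : Prop :=
  forall B : nat -> set R, (forall k, measurable (B k)) ->
    P [set t | forall k, (k < N)%N -> B k (w k t)] =
    (\prod_(k < N) P (w k @^-1` B k))%E.

(** the support (smallest closed set of full measure) of the law of X is S *)
Definition support_is {d} {T : measurableType d} {R : realType}
  (P : probability T R) (X : T -> R) (S : set R) : Prop :=
  P (X @^-1` S) = 1%E /\
  forall U : set R, open U -> U `&` S !=set0 -> (0 < P (X @^-1` U))%E.

Fixpoint state {T : Type} {R : realType} (pi : nat -> R -> R)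
  (w : nat -> T -> R) (k : nat) : T -> R :=
  match k with
  | 0%N => fun _ => 0
  | k'.+1 => fun t => state pi w k' t + pi k' (state pi w k' t) - w k' t
  end.

Definition admissible {d} {T : measurableType d} {R : realType}
  (P : probability T R) (N : nat) (w : nat -> T -> R) (pi : nat -> R -> R) : Prop :=
  (forall k, (k < N)%N -> measurable_fun setT (pi k) /\ forall x, 0 <= pi k x) /\
  (forall k, (1 <= k <= N)%N -> {ae P, forall t, 0 <= state pi w k t}).

Definition cost {d} {T : measurableType d} {R : realType}
  (P : probability T R) (N : nat) (G : R -> R) (w : nat -> T -> R)
  (pi : nat -> R -> R) : \bar R :=
  (\sum_(k < N) \int[P]_t (G (pi k (state pi w k t)))%:E)%E.

Definition opt_cost {d} {T : measurableType d} {R : realType}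
  (P : probability T R) (N : nat) (G : R -> R) (w : nat -> T -> R) : \bar R :=
  ereal_inf [set cost P N G w pi | pi in admissible P N w].

Definition myopic {R : realType} (mu : nat -> R) (Delta : R) : nat -> R -> R :=
  fun k x => Num.max 0 (mu k + Delta - x).

From HB Require Import structures.
From mathcomp Require Import all_boot all_order all_algebra.
From mathcomp Require Import all_classical all_reals all_analysis.
From mathcomp Require Import ring lra measurable_realfun.
Set Implicit Arguments. Unset Strict Implicit. Unset Printing Implicit Defensive.
Import Order.TTheory GRing.Theory Num.Theory.
Import numFieldNormedType.Exports.
Local Open Scope classical_set_scope.
Local Open Scope ring_scope.

(* The myopic policy and the policy ordering up to the levels given by the block
   averages [u] of [(mu_0 + Delta, mu_1, ..., mu_{N-1})] are both base-stock policies
   [x |-> max 0 (c_k - x)] whose levels are never undershot, so at time [k] they order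
   [a_k + (w_{k-1} - mu_{k-1})] for deterministic [a_k] summing to [N M].  By Taylor's
   formula [G] lies between the quadratics [G M + G'(M) (y - M) + K/2 (y - M)^2] for
   [K = l] and [K = L]; taking expectations, the linear terms cancel and the variances
   add up, so the cost of each policy lies between [N G(M) + l/2 (S + V)] and
   [N G(M) + L/2 (S + V)], with [S = S_mu] for the myopic policy and [S = S_u] for the
   other one, which is admissible and hence costs at least [J^*]. *)

Section BlockAveraging.
Variable R : realFieldType.
Implicit Types (v s : seq R) (D : R).

Lemma sum_avg s : (0 < size s)%N -> \sum_(x <- s) x = avg s *+ size s.
Proof. by move=> s0; rewrite /avg -[RHS]mulr_natr divfK // pnatr_eq0 -lt0n. Qed.

Lemma avg_gt D s : all (fun x => D < x) s -> (0 < size s)%N -> D < avg s.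
Proof.
move=> sD s0; rewrite /avg ltr_pdivlMr ?ltr0n // mulr_natr.
elim: s sD s0 => [//|x [|y s] IH] /= /andP[Dx sD] _.
  by rewrite big_seq1.
by rewrite big_cons mulrS ltrD // IH.
Qed.

Lemma foldl_best_len v b (s : seq nat) :
  (1 <= b <= size v)%N -> all (fun j => 1 <= j <= size v)%N s ->
  let b' := foldl (fun b j => if avg (take b v) <= avg (take j v) then j else b) b s in
  [/\ (1 <= b' <= size v)%N, avg (take b v) <= avg (take b' v) &
      forall j, j \in s -> avg (take j v) <= avg (take b' v)].
Proof.
elim: s b => [|j s IH] b bv /=; first by split.
case/andP=> jv sv; set b1 := (if _ then _ else _).
have b1v : (1 <= b1 <= size v)%N by rewrite /b1; case: ifP.
have [b_b1 j_b1] : avg (take b v) <= avg (take b1 v) /\ avg (take j v) <= avg (take b1 v).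
  by rewrite /b1; case: ifP => // /negbT; rewrite -ltNge => /ltW.
have [IH1 IH2 IH3] := IH b1 b1v sv.
split => //; first exact: le_trans IH2.
by move=> i; rewrite inE => /predU1P[->|/IH3]; first exact: le_trans IH2.
Qed.

Lemma best_len_max v : (0 < size v)%N ->
  (1 <= best_len v <= size v)%N /\
  forall i, (1 <= i <= size v)%N -> avg (take i v) <= avg (take (best_len v) v).
Proof.
move=> v0; have mem_range j : (j \in iota 1 (size v)) = (1 <= j <= size v)%N.
  by rewrite mem_iota addnC addn1 ltnS.
have [||bv _ bmax] := @foldl_best_len v 1 (iota 1 (size v)).
- by rewrite leqnn.
- by apply/allP => j; rewrite mem_range.
by split => // i; rewrite -mem_range; apply: bmax.
Qed.

(* Inside the first block, the prefix sums of [u] dominate those of [v] because the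
   block average is the largest prefix average of [v] ([best_len_max]). *)
Lemma ls_aux_spec D fuel v : (size v <= fuel)%N ->
  let u := ls_aux fuel v in
  [/\ size u = size v,
      all (fun x => D < x) v -> all (fun x => D < x) u,
      forall k, \sum_(x <- take k v) x <= \sum_(x <- take k u) x &
      \sum_(x <- v) x = \sum_(x <- u) x].
Proof.
elim: fuel v => [|f IH] v fv /=; first by move: fv; rewrite leqn0 => /nilP ->.
case: v fv => [//|x v'] fv; set v := x :: v'.
have [/andP[j1 jv] jmax] := @best_len_max v isT.
set j := best_len v in j1 jv jmax *; set A := avg (take j v).
have fdrop : (size (drop j v) <= f)%N.
  by rewrite size_drop; apply: leq_trans (leq_sub2l _ j1) _; rewrite subn1.
have [IH1 IH2 IH3 IH4] := IH (drop j v) fdrop.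
set u' := ls_aux f (drop j v) in IH1 IH2 IH3 IH4 *.
have sum_block : \sum_(y <- take j v) y = A *+ j.
  by rewrite sum_avg size_takel.
split.
- by rewrite size_cat size_nseq IH1 size_drop subnKC.
- move=> vD; have := vD; rewrite -(cat_take_drop j v) all_cat => /andP[vD1 vD2].
  rewrite all_cat IH2 // andbT; apply/allP => y; rewrite mem_nseq => /andP[_ /eqP->].
  by apply: avg_gt; rewrite ?size_takel.
- move=> k; rewrite take_cat size_nseq; case: ltnP => jk.
  + rewrite take_nseq; last exact: ltnW.
    rewrite big_nseq iter_addr_0.
    case: k jk => [|k] jk; first by rewrite take0 big_nil.
    have kv : (k.+1 <= size v)%N := ltnW (leq_trans jk jv).
    rewrite sum_avg size_takel //.
    exact/ler_wMn2r/jmax.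
  + have -> : take k v = take j v ++ take (k - j) (drop j v).
      by rewrite -{1}(cat_take_drop j v) take_cat size_takel // ltnNge jk.
    by rewrite !big_cat sum_block big_nseq iter_addr_0 lerD2l; exact: IH3.
- have -> : v = take j v ++ drop j v by rewrite cat_take_drop.
  by rewrite !big_cat big_nseq iter_addr_0 sum_block IH4.
Qed.

Lemma LS_spec D v : let u := LS v in
  [/\ size u = size v,
      all (fun x => D < x) v -> all (fun x => D < x) u,
      forall k, \sum_(x <- take k v) x <= \sum_(x <- take k u) x &
      \sum_(x <- v) x = \sum_(x <- u) x].
Proof. exact: ls_aux_spec. Qed.

Lemma sum_ord_first (f : nat -> R) n : (0 < n)%N ->
  \sum_(k < n) f k = f 0%N + \sum_(1 <= k < n) f k.
Proof. by move=> n0; rewrite -(big_mkord xpredT) big_ltn. Qed.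

Lemma sum_take_nth s n : (n <= size s)%N ->
  \sum_(x <- take n s) x = \sum_(i < n) nth 0 s i.
Proof.
move=> ns; rewrite (big_nth 0) size_takel // big_mkord.
by apply: eq_bigr => i _; rewrite nth_take.
Qed.

End BlockAveraging.

Definition quad_at {R : fieldType} (M g0 g1 K y : R) :=
  g0 + g1 * (y - M) + K / 2 * (y - M) ^+ 2.

Lemma quad_atD {R : numFieldType} (M g0 g1 K a z : R) :
  quad_at M g0 g1 K (a + z) =
  quad_at M g0 g1 K a + (g1 + K * (a - M)) * z + K / 2 * z ^+ 2.
Proof. by rewrite /quad_at; field. Qed.

Lemma sum_quad_at {R : fieldType} n (a : nat -> R) (M g0 g1 K : R) :
  \sum_(k < n) a k = n%:R * M ->
  \sum_(k < n) quad_at M g0 g1 K (a k) =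
  g0 *+ n + K / 2 * \sum_(k < n) (a k - M) ^+ 2.
Proof.
move=> sum_a; rewrite !big_split /= -!mulr_sumr sumr_const card_ord.
by rewrite sumrB sum_a sumr_const card_ord mulr_natl subrr mulr0 addr0.
Qed.

Section QuadraticBounds.
Variable R : realType.
Implicit Types (f df ddf : R -> R) (a b K M t x y z : R).

Lemma le_derive_ge0 f df a b : a <= b ->
  (forall x, a <= x <= b -> is_derive x 1 f (df x)) ->
  (forall x, a <= x <= b -> 0 <= df x) -> f a <= f b.
Proof.
move=> ab fd df_ge0; rewrite -subr_ge0.
have [|c|c cab ->] := @MVT_segment R f df a b ab.
- by move=> x; rewrite in_itv /= => /andP[/ltW ax /ltW xb]; apply: fd; rewrite ax.
- apply: derivable_within_continuous => x; rewrite in_itv /= => abx.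
  exact: (@ex_derive _ _ _ _ _ _ _ (fd x abx)).
- by rewrite in_itv /= in cab; rewrite mulr_ge0 // ?df_ge0 // subr_ge0.
Qed.

Lemma is_derive_sub_quad_at f df M K x : is_derive x 1 f (df x) ->
  is_derive x 1 (fun y => f y - quad_at M (f M) (df M) K y)
                (df x - df M - K * (x - M)).
Proof.
move=> fd; have -> : (fun y => f y - quad_at M (f M) (df M) K y) =
  f - (cst (f M) + df M \*: (id - cst M) + (K / 2) \*: ((id - cst M) ^+ 2)).
  by apply/funext => y; rewrite /quad_at.
apply: is_derive_eq; rewrite /GRing.scale /= -[(id - cst M) x]/(x - M) expr1.
by field.
Qed.

(* [h := f - quad_at M ...] has the derivative [g x := f' x - f' M - K (x - M)],
   which is nondecreasing and vanishes at [M]; so [h] is minimal at [M], where it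
   vanishes. *)
Lemma quad_at_le f df ddf K M y :
  (forall x, 0 < x -> is_derive x 1 f (df x)) ->
  (forall x, 0 < x -> is_derive x 1 df (ddf x)) ->
  (forall x, 0 < x -> K <= ddf x) -> 0 < M -> 0 < y ->
  quad_at M (f M) (df M) K y <= f y.
Proof.
move=> fd dfd K_ddf M0 y0.
pose g : R -> R := df - cst (df M) - K \*: (id - cst M).
have gd t : 0 < t -> is_derive t 1 g (ddf t - K).
  move=> t0; have dft := dfd t t0.
  by apply: is_derive_eq; rewrite /GRing.scale /= !subr0 mulr1.
have g_mono x z : 0 < x -> x <= z -> g x <= g z.
  move=> x0 xz; apply: le_derive_ge0 xz _ _ => t /andP[xt _].
  + exact/gd/(lt_le_trans x0 xt).
  + by rewrite subr_ge0 K_ddf // (lt_le_trans x0 xt).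
have gM : g M = 0.
  by rewrite -[g M]/(df M - df M - K * (M - M)) !subrr mulr0 subr0.
pose h : R -> R := fun y => f y - quad_at M (f M) (df M) K y.
have hd t : 0 < t -> is_derive t 1 h (g t).
  move=> t0; have dht := is_derive_sub_quad_at M K (fd t t0).
  by apply: is_derive_eq; rewrite /g /GRing.scale.
have hM : h M = 0.
  by rewrite /h /quad_at subrr expr0n /= !mulr0 !addr0 subrr.
rewrite -subr_ge0 -/(h y) -hM; case: (leP M y) => [My|yM].
- apply: le_derive_ge0 My _ _ => t /andP[Mt _]; have t0 := lt_le_trans M0 Mt.
  + exact: hd.
  + by rewrite -gM g_mono.
- rewrite -lerN2; apply: (@le_derive_ge0 (- h) (- g) y M (ltW yM)) => t /andP[yt tM].
  + by apply: is_deriveN; apply: hd; apply: lt_le_trans yt.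
  + by rewrite /= oppr_ge0 -gM g_mono // (lt_le_trans y0).
Qed.

Lemma le_quad_at f df ddf L M y :
  (forall x, 0 < x -> is_derive x 1 f (df x)) ->
  (forall x, 0 < x -> is_derive x 1 df (ddf x)) ->
  (forall x, 0 < x -> ddf x <= L) -> 0 < M -> 0 < y ->
  f y <= quad_at M (f M) (df M) L y.
Proof.
move=> fd dfd ddf_L M0 y0; rewrite -lerN2.
have := @quad_at_le (- f) (- df) (- ddf) (- L) M y.
have -> : quad_at M ((- f) M) ((- df) M) (- L) y = - quad_at M (f M) (df M) L y.
  by rewrite /quad_at !opprfctE; field.
apply=> // x x0; first exact/is_deriveN/fd.
- exact/is_deriveN/dfd.
- by rewrite /= lerN2 ddf_L.
Qed.

End QuadraticBounds.

Section BaseStockPolicies.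
Context (R : realType) (d : measure_display) (T : measurableType d)
  (P : probability T R) (N : nat) (w : nat -> T -> R) (mu sigma : nat -> R) (Delta : R).
Hypothesis Delta_ge0 : 0 <= Delta.
Hypothesis w_measurable : forall k, (k < N)%N -> measurable_fun setT (w k).
Hypothesis w_support :
  forall k, (k < N)%N -> support_is P (w k) `[mu k - Delta, mu k + Delta].
Hypothesis mu_sub_Delta_gt0 : forall k, (k < N)%N -> 0 < mu k - Delta.

Definition demands_in_support t :=
  forall k, (k < N)%N -> mu k - Delta <= w k t <= mu k + Delta.

Lemma ae_demands_in_support : {ae P, forall t, demands_in_support t}.
Proof.
have ae_k k : (k < N)%N -> {ae P, forall t, mu k - Delta <= w k t <= mu k + Delta}.
  move=> kN; have [Pw _] := w_support kN.
  have mS : measurable (w k @^-1` `[mu k - Delta, mu k + Delta]).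
    by rewrite -[_ @^-1` _]setTI; apply: (w_measurable kN) => //; exact: measurable_itv.
  exists (~` (w k @^-1` `[mu k - Delta, mu k + Delta])); split.
  - exact: measurableC.
  - by rewrite probability_setC // Pw subee.
  - by move=> t /= wt; apply: wt; rewrite /= in_itv.
suff ae_lt n : (n <= N)%N ->
    {ae P, forall t k, (k < n)%N -> mu k - Delta <= w k t <= mu k + Delta}.
  exact: ae_lt.
elim: n => [|n IH] nN; first exact: aeW.
apply: filterS2 (IH (ltnW nN)) (ae_k n nN) => t wt wn k.
by rewrite ltnS leq_eqVlt => /predU1P[->|/wt].
Qed.

Definition base_stock (c : nat -> R) : nat -> R -> R :=
  fun k x => Num.max 0 (c k - x).

Definition mean_order (c : nat -> R) k :=
  if k is k'.+1 then c k - c k' + mu k' else c 0%N.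

Definition clamp x := Num.max (- Delta) (Num.min Delta x).

(* Under [base_stock c] the order at time [k] is [mean_order c k] plus the
   deviation [w_{k-1} - mu_{k-1}] of the previous demand; clamping it to
   [[-Delta, Delta]] changes it only on a null set and makes it bounded. *)
Definition demand_dev k t :=
  if k is k'.+1 then clamp (w k' t - mu k') else 0.

Definition dev_var k := if k is k'.+1 then sigma k' ^+ 2 else 0.

Lemma base_stock_ge0 c k x : 0 <= base_stock c k x.
Proof. by rewrite /base_stock le_max lexx. Qed.

Lemma base_stock_le c k x : x <= c k -> base_stock c k x = c k - x.
Proof. by move=> xc; rewrite /base_stock max_r // subr_ge0. Qed.

Lemma measurable_base_stock c k : measurable_fun setT (base_stock c k).
Proof.
apply: nonincreasing_measurable => // x y xy.
by rewrite /base_stock ge_max !le_max lexx /=; apply/orP; right; lra.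
Qed.

Lemma demand_dev_bound k t : `|demand_dev k t| <= Delta.
Proof.
case: k => [|k] /=; first by rewrite normr0.
rewrite ler_norml /clamp le_max lexx ge_max lerNl.
by rewrite ge_min lexx orTb (le_trans _ Delta_ge0) // oppr_le0.
Qed.

Lemma demand_dev_in_support k t : demands_in_support t -> (k < N)%N ->
  demand_dev k.+1 t = w k t - mu k.
Proof.
move=> wt kN; have /andP[w_lo w_hi] := wt k kN.
by rewrite /= /clamp min_r ?max_r //; lra.
Qed.

Section BaseStockLevels.
Variable c : nat -> R.
Hypothesis c_ge : forall k, (k < N)%N -> mu k + Delta <= c k.
Hypothesis c_step : forall k, (k.+1 < N)%N -> c k - mu k + Delta <= c k.+1.

Lemma state_base_stock t : demands_in_support t -> forall k, (k < N)%N ->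
  state (base_stock c) w k t <= c k /\ state (base_stock c) w k.+1 t = c k - w k t.
Proof.
move=> wt; elim=> [|k IH] kN.
  have c0 : 0 <= c 0%N.
    by have := c_ge kN; have := mu_sub_Delta_gt0 kN; have := Delta_ge0; lra.
  by rewrite /= base_stock_le // subr0 add0r.
have [_ state_k1] := IH (ltnW kN).
have state_le : state (base_stock c) w k.+1 t <= c k.+1.
  by rewrite state_k1; have := c_step kN; have /andP[] := wt k (ltnW kN); lra.
split => //; pose x := state (base_stock c) w k.+1 t.
by rewrite -[state _ w k.+2 t]/(x + base_stock c k.+1 x - w k.+1 t) base_stock_le //; ring.
Qed.

Lemma order_base_stock t k : demands_in_support t -> (k < N)%N ->
  base_stock c k (state (base_stock c) w k t) = mean_order c k + demand_dev k t.
Proof.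
move=> wt; case: k => [|k] kN.
  by have [+ _] := state_base_stock wt kN; rewrite addr0 => /base_stock_le ->; rewrite subr0.
have [/base_stock_le -> _] := state_base_stock wt kN.
have [_ ->] := state_base_stock wt (ltnW kN).
rewrite demand_dev_in_support ?(ltnW kN) //=; ring.
Qed.

Lemma admissible_base_stock : admissible P N w (base_stock c).
Proof.
split => [k kN|[//|k] /andP[_ kN]].
  by split; [exact: measurable_base_stock | exact: base_stock_ge0].
apply: filterS ae_demands_in_support => t wt.
have [_ ->] := state_base_stock wt kN.
by have := c_ge kN; have /andP[] := wt k kN; lra.
Qed.

End BaseStockLevels.

Lemma measurable_state c k : (k <= N)%N ->
  measurable_fun setT (state (base_stock c) w k).
Proof.
elim: k => [|k IH] kN; first exact: measurable_cst.
have m_k := IH (ltnW kN).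
apply: measurable_funB; last exact: w_measurable.
by apply: measurable_funD => //; exact: measurableT_comp (measurable_base_stock c k) m_k.
Qed.

Lemma measurable_demand_dev k : (k <= N)%N -> measurable_fun setT (demand_dev k).
Proof.
case: k => [|k] kN; first exact: measurable_cst.
apply: measurableT_comp; last first.
  by apply: measurable_funB; [exact: w_measurable | exact: measurable_cst].
apply: nondecreasing_measurable => // x y xy.
rewrite /clamp ge_max !le_max lexx /=; apply/orP; right.
by rewrite le_min !ge_min lexx xy /= orbT.
Qed.

Lemma integrable_bounded (f : T -> R) C : measurable_fun setT f ->
  (forall t, `|f t| <= C) -> P.-integrable setT (EFin \o f).
Proof.
move=> mf fC; apply: measurable_bounded_integrable => //.
  by rewrite [X in (X < _)%E]probability_setT ltry.
exists C; split; first exact: num_real.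
by move=> C' CC' t _; exact: le_trans (fC t) (ltW CC').
Qed.

Lemma integral_cst_probability r : (\int[P]_t r%:E = r%:E)%E.
Proof. by rewrite integral_cst // [X in (_ * X)%E]probability_setT mule1. Qed.

Hypothesis w_mean : forall k, (k < N)%N -> ('E_P[w k] = (mu k)%:E)%E.
Hypothesis w_var : forall k, (k < N)%N -> ('V_P[w k] = (sigma k ^+ 2)%:E)%E.

Lemma integral_demand_dev k : (k < N)%N -> (\int[P]_t (demand_dev k t)%:E = 0)%E.
Proof.
case: k => [|k] kN; first by rewrite integral0.
have kN' := ltnW kN; have md := measurable_demand_dev kN'.
have int_w : P.-integrable setT (EFin \o (fun t => mu k + demand_dev k.+1 t)).
  apply: (@integrable_bounded _ (`|mu k| + Delta)) => [|t].
    exact: measurable_funD (measurable_cst _) md.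
  by rewrite (le_trans (ler_normD _ _)) // lerD2l demand_dev_bound.
have int_mu : P.-integrable setT (EFin \o (fun _ : T => mu k)).
  by apply: (@integrable_bounded _ `|mu k|) => //; exact: measurable_cst.
transitivity (\int[P]_t ((mu k + demand_dev k.+1 t)%:E - (mu k)%:E))%E.
  by apply: eq_integral => t _; rewrite -EFinB addrC addKr.
rewrite integralB_EFin // integral_cst_probability.
have -> : (\int[P]_t (mu k + demand_dev k.+1 t)%:E = \int[P]_t (w k t)%:E)%E.
  apply: ae_eq_integral => //.
  - exact/measurable_EFinP/(measurable_funD (measurable_cst _) md).
  - exact/measurable_EFinP/w_measurable.
  - apply: filterS ae_demands_in_support => t wt _.
    by rewrite demand_dev_in_support // addrC subrK.
have -> : (\int[P]_t (w k t)%:E = (mu k)%:E)%E.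
  by rewrite -(w_mean kN') expectation.unlock.
by rewrite subee.
Qed.

Lemma integral_demand_dev_sqr k : (k < N)%N ->
  (\int[P]_t (demand_dev k t ^+ 2)%:E = (dev_var k)%:E)%E.
Proof.
case: k => [|k] kN.
  by rewrite (eq_integral (fun _ => 0%E)) ?integral0 // => t _; rewrite expr0n.
have kN' := ltnW kN; have := w_var kN'.
rewrite /variance covariance.unlock w_mean // /= expectation.unlock => <-.
apply: ae_eq_integral => //.
- by apply/measurable_EFinP/measurable_funX; exact: measurable_demand_dev kN'.
- apply/measurable_EFinP; apply: measurable_funM;
    by apply: measurable_funB; [exact: w_measurable | exact: measurable_cst].
- apply: filterS ae_demands_in_support => t wt _.
  by rewrite -/(demand_dev k.+1 t) demand_dev_in_support // expr2.
Qed.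

Section QuadAtOrder.
Variables (k : nat) (a M g0 g1 K : R).
Hypothesis kN : (k < N)%N.

Let z := demand_dev k.
Let quad_at_order_split :
  EFin \o (fun t => quad_at M g0 g1 K (a + z t)) =
  (fun t => ((quad_at M g0 g1 K a)%:E + (g1 + K * (a - M))%:E * (z t)%:E) +
            (K / 2)%:E * (z t ^+ 2)%:E)%E.
Proof. by apply/funext => t; rewrite /= quad_atD -!EFinM -!EFinD. Qed.

Let int_z : P.-integrable setT (EFin \o z).
Proof.
apply: (@integrable_bounded _ Delta) => [|t]; last exact: demand_dev_bound.
exact: measurable_demand_dev (ltnW kN).
Qed.

Let int_z2 : P.-integrable setT (EFin \o (fun t => z t ^+ 2)).
Proof.
apply: (@integrable_bounded _ (Delta ^+ 2)) => [|t].
  exact/measurable_funX/measurable_demand_dev/ltnW.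
by rewrite normrX lerXn2r ?nnegrE // demand_dev_bound.
Qed.

Let int_cst r : P.-integrable setT (EFin \o (fun _ : T => r)).
Proof. by apply: (@integrable_bounded _ `|r|) => //; exact: measurable_cst. Qed.

Let int_lin : P.-integrable setT
  (fun t => ((quad_at M g0 g1 K a)%:E + (g1 + K * (a - M))%:E * (z t)%:E)%E).
Proof. by apply: integrableD => //; [exact: int_cst | exact: integrableZl]. Qed.

Lemma integrable_quad_at_order :
  P.-integrable setT (EFin \o (fun t => quad_at M g0 g1 K (a + z t))).
Proof. by rewrite quad_at_order_split; apply: integrableD => //; exact: integrableZl. Qed.

Lemma integral_quad_at_order :
  (\int[P]_t (quad_at M g0 g1 K (a + z t))%:E =
   (quad_at M g0 g1 K a + K / 2 * dev_var k)%:E)%E.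
Proof.
rewrite -[fun t => _]/(EFin \o (fun t => quad_at M g0 g1 K (a + z t))) quad_at_order_split.
rewrite integralD //; last exact: integrableZl.
rewrite integralD //; [|exact: int_cst|exact: integrableZl].
rewrite !integralZl // integral_cst_probability integral_demand_dev //.
by rewrite integral_demand_dev_sqr // mule0 adde0 -EFinM -EFinD.
Qed.

End QuadAtOrder.

Definition LS_orders :=
  LS (mkseq (fun k => if k == 0%N then mu 0%N + Delta else mu k) N).

Lemma sum_dev_var : \sum_(k < N) dev_var k = \sum_(k < N.-1) sigma k ^+ 2.
Proof. by case: N => [|n]; rewrite ?big_ord0 // big_ord_recl add0r. Qed.

Section CostBounds.
Variable G : R -> R.
Hypothesis G_incr : forall x y, 0 <= x -> x < y -> G x < G y.
Hypothesis G0 : G 0 = 0.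

Let G_nondecr x y : 0 <= x -> x <= y -> G x <= G y.
Proof. by move=> x0; rewrite le_eqVlt => /predU1P[-> // | /(G_incr x0)/ltW]. Qed.

Lemma measurable_G_comp (f : T -> R) : measurable_fun setT f -> (forall t, 0 <= f t) ->
  measurable_fun setT (fun t => G (f t)).
Proof.
move=> mf f_ge0; have -> : (fun t => G (f t)) = (G \o Num.max 0) \o f.
  by apply/funext => t; rewrite /= max_r.
apply: measurableT_comp mf; apply: nondecreasing_measurable => // x y xy.
by apply: G_nondecr => /=; [rewrite le_max lexx | rewrite ge_max !le_max lexx /= xy orbT].
Qed.

Let order_gt0 k a t : Delta < a -> 0 < a + demand_dev k t.
Proof. by have := demand_dev_bound k t; rewrite ler_norml => /andP[? _]; lra. Qed.

Let measurable_order k a : (k < N)%N ->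
  measurable_fun setT (fun t => a + demand_dev k t).
Proof.
by move=> kN; exact: measurable_funD (measurable_cst _) (measurable_demand_dev (ltnW kN)).
Qed.

Lemma integrable_G_order k a : (k < N)%N -> Delta < a ->
  P.-integrable setT (EFin \o (fun t => G (a + demand_dev k t))).
Proof.
move=> kN Da; apply: (@integrable_bounded _ (G (a + Delta))) => [|t].
  by apply: measurable_G_comp => [|t]; [exact: measurable_order | exact/ltW/order_gt0].
rewrite ger0_norm; last by rewrite -G0 G_nondecr // ltW // order_gt0.
apply: G_nondecr; first exact/ltW/order_gt0.
by rewrite lerD2l; have := demand_dev_bound k t; rewrite ler_norml => /andP[].
Qed.

Section FixedLevels.
Variable c : nat -> R.
Hypothesis c_ge : forall k, (k < N)%N -> mu k + Delta <= c k.
Hypothesis c_step : forall k, (k.+1 < N)%N -> c k - mu k + Delta <= c k.+1.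
Hypothesis order_gt : forall k, (k < N)%N -> Delta < mean_order c k.

Lemma cost_base_stock : cost P N G w (base_stock c) =
  (\sum_(k < N) \int[P]_t (G (mean_order c k + demand_dev k t))%:E)%E.
Proof.
apply: eq_bigr => k _; have kN := ltn_ord k.
apply: ae_eq_integral => //.
- apply/measurable_EFinP/measurable_G_comp => [|t]; last exact: base_stock_ge0.
  exact: measurableT_comp (measurable_base_stock c k) (measurable_state c (ltnW kN)).
- apply/measurable_EFinP/measurable_G_comp => [|t]; first exact: measurable_order.
  exact/ltW/order_gt0/order_gt.
- apply: filterS ae_demands_in_support => t wt _.
  by rewrite (order_base_stock c_ge c_step wt kN).
Qed.

Lemma sum_quad_at_order g0 g1 K M : \sum_(k < N) mean_order c k = N%:R * M ->
  \sum_(k < N) (quad_at M g0 g1 K (mean_order c k) + K / 2 * dev_var k) =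
  g0 *+ N + K / 2 * (\sum_(k < N) (mean_order c k - M) ^+ 2 +
                     \sum_(k < N.-1) sigma k ^+ 2).
Proof.
move=> sum_a; rewrite big_split /= sum_quad_at // -mulr_sumr sum_dev_var.
by rewrite mulrDr addrA.
Qed.

Lemma cost_base_stock_ge g0 g1 K M : \sum_(k < N) mean_order c k = N%:R * M ->
  (forall y, 0 < y -> quad_at M g0 g1 K y <= G y) ->
  ((g0 *+ N + K / 2 * (\sum_(k < N) (mean_order c k - M) ^+ 2 +
                       \sum_(k < N.-1) sigma k ^+ 2))%:E <=
   cost P N G w (base_stock c))%E.
Proof.
move=> sum_a quad_le; rewrite -(sum_quad_at_order g0 g1 K sum_a) cost_base_stock -sumEFin.
apply: lee_sum => k _; have kN := ltn_ord k; rewrite -integral_quad_at_order //.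
apply: le_integral => //.
- exact: integrable_quad_at_order kN.
- exact: integrable_G_order (order_gt kN).
- by move=> t _; rewrite lee_fin quad_le // order_gt0 // order_gt.
Qed.

Lemma cost_base_stock_le g0 g1 K M : \sum_(k < N) mean_order c k = N%:R * M ->
  (forall y, 0 < y -> G y <= quad_at M g0 g1 K y) ->
  (cost P N G w (base_stock c) <=
   (g0 *+ N + K / 2 * (\sum_(k < N) (mean_order c k - M) ^+ 2 +
                       \sum_(k < N.-1) sigma k ^+ 2))%:E)%E.
Proof.
move=> sum_a quad_ge; rewrite -(sum_quad_at_order g0 g1 K sum_a) cost_base_stock -sumEFin.
apply: lee_sum => k _; have kN := ltn_ord k; rewrite -integral_quad_at_order //.
apply: le_integral => //.
- exact: integrable_G_order (order_gt kN).
- exact: integrable_quad_at_order kN.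
- by move=> t _; rewrite lee_fin quad_ge // order_gt0 // order_gt.
Qed.

End FixedLevels.

Lemma cost_myopic_ge g0 g1 K M : (0 < N)%N ->
  Delta + \sum_(k < N) mu k = N%:R * M ->
  (forall y, 0 < y -> quad_at M g0 g1 K y <= G y) ->
  ((g0 *+ N + K / 2 * ((mu 0%N + Delta - M) ^+ 2 + \sum_(1 <= k < N) (mu k - M) ^+ 2 +
                       \sum_(k < N.-1) sigma k ^+ 2))%:E <=
   cost P N G w (myopic mu Delta))%E.
Proof.
move=> N0 sum_mu quad_le; pose c k := mu k + Delta.
have mean_c k : mean_order c k.+1 = mu k.+1 by rewrite /= /c; ring.
have sum_mean_c : \sum_(1 <= k < N) mean_order c k = \sum_(1 <= k < N) mu k.
  by apply: eq_big_nat => -[//|k] _; rewrite mean_c.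
have sum_sqr_mean_c :
    \sum_(1 <= k < N) (mean_order c k - M) ^+ 2 = \sum_(1 <= k < N) (mu k - M) ^+ 2.
  by apply: eq_big_nat => -[//|k] _; rewrite mean_c.
have Delta_lt k : (k < N)%N -> Delta < mu k.
  by move=> kN; have := mu_sub_Delta_gt0 kN; lra.
have c_ge k : (k < N)%N -> mu k + Delta <= c k by [].
have c_step k : (k.+1 < N)%N -> c k - mu k + Delta <= c k.+1.
  by move=> kN; rewrite /c; have := Delta_lt _ kN; have := Delta_ge0; lra.
have order_gt k : (k < N)%N -> Delta < mean_order c k.
  case: k => [|k] kN; last by rewrite mean_c Delta_lt.
  by rewrite /= /c; have := Delta_lt _ kN; have := Delta_ge0; lra.
have sum_c : \sum_(k < N) mean_order c k = N%:R * M.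
  by rewrite -sum_mu !(sum_ord_first _ N0) sum_mean_c /= /c addrCA addrA.
have := cost_base_stock_ge c_ge c_step order_gt sum_c quad_le.
by rewrite (sum_ord_first (fun k => (mean_order c k - M) ^+ 2) N0) sum_sqr_mean_c.
Qed.

Lemma LS_base_stock_levels : (0 < N)%N ->
  exists c : nat -> R,
  [/\ forall k, (k < N)%N -> mu k + Delta <= c k,
      forall k, (k.+1 < N)%N -> c k - mu k + Delta <= c k.+1,
      forall k, mean_order c k = nth 0 LS_orders k,
      forall k, (k < N)%N -> Delta < nth 0 LS_orders k &
      \sum_(k < N) nth 0 LS_orders k = Delta + \sum_(k < N) mu k].
Proof.
move=> N0; set u := LS_orders.
pose v := mkseq (fun k => if k == 0%N then mu 0%N + Delta else mu k) N.
have [size_u u_gt prefix_u sum_u] := LS_spec Delta v.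
rewrite -/u in size_u u_gt prefix_u sum_u.
have size_v : size v = N by rewrite size_mkseq.
have v_gt : all (fun x => Delta < x) v.
  apply/allP => x /mapP[i]; rewrite mem_iota add0n => /= iN ->.
  have := mu_sub_Delta_gt0 iN; have := Delta_ge0.
  by case: eqP => [->|_]; lra.
have Delta_lt_u k : (k < N)%N -> Delta < nth 0 u k.
  by move=> kN; apply: (allP (u_gt v_gt)); rewrite mem_nth // size_u size_v.
have sum_v k : (k < N)%N -> \sum_(i < k.+1) nth 0 v i = Delta + \sum_(i < k.+1) mu i.
  move=> kN; rewrite big_ord_recl [in RHS]big_ord_recl nth_mkseq //= addrA [Delta + _]addrC.
  by congr (_ + _); apply: eq_bigr => i _; rewrite nth_mkseq // (leq_ltn_trans (ltn_ord i) kN).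
exists (fun k => \sum_(i < k.+1) nth 0 u i - \sum_(i < k) mu i); split => //.
- move=> k kN; have := prefix_u k.+1.
  rewrite !sum_take_nth ?size_u ?size_v // sum_v //.
  have : \sum_(i < k.+1) mu i = \sum_(i < k) mu i + mu k by rewrite big_ord_recr.
  by lra.
- move=> k kN; have := Delta_lt_u _ kN.
  have := @big_ord_recr R 0 +%R k (fun i => mu i).
  have := @big_ord_recr R 0 +%R k.+1 (fun i => nth 0 u i).
  by rewrite /=; lra.
- by case=> [|k] /=; rewrite ?big_ord1 ?big_ord0 ?subr0 // !big_ord_recr /=; ring.
- case: N N0 size_v sum_v => // n _ size_v sum_v; rewrite -sum_v //.
  by rewrite -!sum_take_nth ?size_u ?size_v // !take_oversize ?size_u ?size_v.
Qed.

Lemma opt_cost_le_LS g0 g1 K M : (0 < N)%N ->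
  Delta + \sum_(k < N) mu k = N%:R * M ->
  (forall y, 0 < y -> G y <= quad_at M g0 g1 K y) ->
  (opt_cost P N G w <=
   (g0 *+ N + K / 2 * (\sum_(k < N) (nth 0 LS_orders k - M) ^+ 2 +
                       \sum_(k < N.-1) sigma k ^+ 2))%:E)%E.
Proof.
move=> N0 sum_mu quad_ge.
have [c [c_ge c_step mean_c u_gt sum_u]] := LS_base_stock_levels N0.
have order_gt k : (k < N)%N -> Delta < mean_order c k by rewrite mean_c; exact: u_gt.
have sum_c : \sum_(k < N) mean_order c k = N%:R * M.
  by under eq_bigr do rewrite mean_c; rewrite sum_u.
have sum_sqr : \sum_(k < N) (nth 0 LS_orders k - M) ^+ 2 =
                \sum_(k < N) (mean_order c k - M) ^+ 2.
  by apply: eq_bigr => k _; rewrite mean_c.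
rewrite sum_sqr; apply: le_trans (cost_base_stock_le c_ge c_step order_gt sum_c quad_ge).
apply: ereal_inf_lbound; exists (base_stock c) => //.
exact: admissible_base_stock c_ge c_step.
Qed.

End CostBounds.

End BaseStockPolicies.

Theorem theorem2 (R : realType) (d : measure_display) (T : measurableType d)
  (P : probability T R) (N : nat) (G : R -> R) (w : nat -> T -> R)
  (mu sigma : nat -> R) (Delta l L : R) :
  (1 <= N)%N ->
  (forall x y t, 0 <= x -> 0 <= y -> x != y -> 0 < t < 1 ->
     G (t * x + (1 - t) * y) < t * G x + (1 - t) * G y) ->
  (forall x y, 0 <= x -> x < y -> G x < G y) ->
  G 0 = 0 ->
  0 < l -> l <= L ->
  (forall y, 0 < y -> derivable G y 1 /\ derivable (derive1 G) y 1 /\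
     l <= derive1 (derive1 G) y <= L) ->
  0 <= Delta ->
  (forall k, (k < N)%N -> measurable_fun setT (w k)) ->
  mutually_independent P N w ->
  (forall k, (k < N)%N -> ('E_P[w k] = (mu k)%:E)%E) ->
  (forall k, (k < N)%N -> ('V_P[w k] = (sigma k ^+ 2)%:E)%E) ->
  (forall k, (k < N)%N -> support_is P (w k) `[mu k - Delta, mu k + Delta]) ->
  (forall k, (k < N)%N -> 0 < mu k - Delta) ->
  let M := (Delta + \sum_(k < N) mu k) / N%:R in
  let u := LS (mkseq (fun k => if k == 0%N then mu 0%N + Delta else mu k) N) in
  let S_u := \sum_(k < N) (nth 0 u k - M) ^+ 2 in
  let S_mu := (mu 0%N + Delta - M) ^+ 2 + \sum_(1 <= k < N) (mu k - M) ^+ 2 in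
  let V := \sum_(k < N.-1) sigma k ^+ 2 in
  ((l / 2 * (S_mu + V) - L / 2 * (S_u + V))%:E <=
   cost P N G w (myopic mu Delta) - opt_cost P N G w)%E.
Proof.
move=> N0 _ G_incr G0 l0 lL G_second Delta0 w_meas _ w_mean w_var w_supp mu_gt.
cbv zeta; set M := (Delta + \sum_(k < N) mu k) / N%:R.
have sum_mu : Delta + \sum_(k < N) mu k = N%:R * M.
  by rewrite /M mulrC divfK // pnatr_eq0 -lt0n.
have M0 : 0 < M.
  rewrite /M divr_gt0 ?ltr0n // (sum_ord_first _ N0) addrA.
  apply: ltr_wpDr; last by have := mu_gt 0%N N0; lra.
  by rewrite big_nat_cond sumr_ge0 // => k /andP[/andP[_ /mu_gt/ltW]]; lra.
have dG (x : R) : 0 < x ->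
    is_derive x 1 G (derive1 G x) /\ is_derive x 1 (derive1 G) (derive1 (derive1 G) x).
  move=> x0; have [dG [ddG _]] := G_second x x0.
  by rewrite !derive1E; split; exact: derivableP.
have G_ge (y : R) : 0 < y -> quad_at M (G M) (derive1 G M) l y <= G y.
  apply: quad_at_le => // x x0; [exact: (dG x x0).1 | exact: (dG x x0).2 |].
  by have [_ [_ /andP[]]] := G_second x x0.
have G_le (y : R) : 0 < y -> G y <= quad_at M (G M) (derive1 G M) L y.
  apply: le_quad_at => // x x0; [exact: (dG x x0).1 | exact: (dG x x0).2 |].
  by have [_ [_ /andP[]]] := G_second x x0.
have myopic_ge := cost_myopic_ge Delta0 w_meas w_supp mu_gt w_mean w_var G_incr G0
  N0 sum_mu G_ge.
have opt_le := opt_cost_le_LS Delta0 w_meas w_supp mu_gt w_mean w_var G_incr G0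
  N0 sum_mu G_le.
apply: le_trans (leeB myopic_ge opt_le); rewrite -EFinB lee_fin.
by rewrite opprD addrACA subrr add0r.
Qed.
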